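(* Let $n\ge2$ and let $G\subsetneq\mathbb{R}^n$ be a domain. Then $G$ is convex if and only if $s_G(x,y)\le p_G(x,y)$ for all $x,y\in G$.
   Context: A domain is a non-empty, open, connected set. $d_G(x)=\inf\{|x-z|:z\in\partial G\}$, $s_G(x,y)=\frac{|x-y|}{\inf_{z\in\partial G}(|x-z|+|z-y|)}$, $p_G(x,y)=\frac{|x-y|}{\sqrt{|x-y|^2+4d_G(x)d_G(y)}}$. *)

From HB Require Import structures.
From mathcomp Require Import all_boot all_order all_algebra.
From mathcomp Require Import all_classical all_reals all_analysis.
Set Implicit Arguments. Unset Strict Implicit. Unset Printing Implicit Defensive.
Import Order.TTheory GRing.Theory Num.Theory.
Import numFieldNormedType.Exports.
Local Open Scope classical_set_scope.
Local Open Scope ring_scope.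

Section Defs.
Variables (R : realType) (n : nat).

(* Euclidean norm |x| on R^n (the library's default norm on 'rV is the sup
   norm, which induces the same topology but a different metric). *)
Definition enorm (x : 'rV[R]_n) : R := Num.sqrt (\sum_(i < n) x ord0 i ^+ 2).

Definition domain (G : set 'rV[R]_n) : Prop :=
  G !=set0 /\ open G /\ connected G.

Definition bd (G : set 'rV[R]_n) : set 'rV[R]_n :=
  closure G `\` interior G.

Definition dG (G : set 'rV[R]_n) (x : 'rV[R]_n) : R :=
  inf [set enorm (x - z) | z in bd G].

Definition sG (G : set 'rV[R]_n) (x y : 'rV[R]_n) : R :=
  enorm (x - y) / inf [set enorm (x - z) + enorm (z - y) | z in bd G].

Definition pG (G : set 'rV[R]_n) (x y : 'rV[R]_n) : R :=
  enorm (x - y) /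
    Num.sqrt (enorm (x - y) ^+ 2 + 4 * dG G x * dG G y).

Definition convex_dom (G : set 'rV[R]_n) : Prop :=
  forall x y, G x -> G y -> forall t : R, 0 <= t -> t <= 1 ->
    G ((1 - t) *: x + t *: y).

End Defs.

From HB Require Import structures.
From mathcomp Require Import all_boot all_order all_algebra.
From mathcomp Require Import all_classical all_reals all_analysis.
From mathcomp Require Import ring lra.
Import Order.TTheory GRing.Theory Num.Theory.
Import numFieldNormedType.Exports.
Local Open Scope classical_set_scope.
Local Open Scope ring_scope.

(* If G is convex and z lies outside G, then z cannot be inside the ellipse
   with foci x, y on which |x-z| + |z-y| = sqrt(|x-y|^2 + 4 d_G(x) d_G(y)):
   every such point is a convex combination of a point of the ball
   B(x, d_G(x)) and a point of B(y, d_G(y)), both contained in G.  Taking the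
   infimum over boundary points z gives s_G <= p_G.  Conversely, if G is not
   convex, some segment [x, y] with x, y in G meets the boundary at z; then
   |x-z| + |z-y| = |x-y|, so s_G(x, y) >= 1 > p_G(x, y). *)

Section EuclideanNorm.
Context {R : realType} {n : nat}.
Implicit Types (u v x y z : 'rV[R]_n) (a b c : R).

Definition edot u v : R := \sum_i u ord0 i * v ord0 i.

Lemma enorm_ge0 v : 0 <= enorm v.
Proof. exact: sqrtr_ge0. Qed.

Lemma enorm_sqr v : enorm v ^+ 2 = \sum_i v ord0 i ^+ 2.
Proof. by rewrite sqr_sqrtr // sumr_ge0 // => i _; rewrite sqr_ge0. Qed.

Lemma enormZ c v : enorm (c *: v) = `|c| * enorm v.
Proof.
rewrite /enorm (eq_bigr (fun i => c ^+ 2 * v ord0 i ^+ 2)); last first.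
  by move=> i _; rewrite mxE exprMn.
by rewrite -mulr_sumr sqrtrM ?sqr_ge0 // sqrtr_sqr.
Qed.

Lemma enormN v : enorm (- v) = enorm v.
Proof. by rewrite -scaleN1r enormZ normrN normr1 mul1r. Qed.

Lemma enorm_distrC u v : enorm (u - v) = enorm (v - u).
Proof. by rewrite -opprB enormN. Qed.

Lemma mx_norm_le_enorm v : `|v| <= enorm v.
Proof.
rewrite [`|v|]mx_normrE; apply: bigmax_le => [|[i j] _]; first exact: enorm_ge0.
rewrite /= (ord1 i) -sqrtr_sqr ler_sqrt ?sumr_ge0 // => [|k _]; last first.
  by rewrite sqr_ge0.
by rewrite (bigD1 j) //= lerDl sumr_ge0 // => k _; rewrite sqr_ge0.
Qed.

Lemma enorm_gt0 v : v != 0 -> 0 < enorm v.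
Proof.
move=> v0; apply: lt_le_trans (mx_norm_le_enorm v).
by rewrite normr_gt0.
Qed.

Lemma enorm_combine_sqr a b u v :
  enorm (a *: u + b *: v) ^+ 2 =
  a ^+ 2 * enorm u ^+ 2 + b ^+ 2 * enorm v ^+ 2 + 2 * a * b * edot u v.
Proof.
rewrite !enorm_sqr /edot !mulr_sumr -!big_split /=.
by apply: eq_bigr => i _; rewrite !mxE; ring.
Qed.

Lemma enorm_bisector_sqr u v :
  enorm (enorm v *: u + enorm u *: v) ^+ 2 =
  enorm u * enorm v * ((enorm u + enorm v) ^+ 2 - enorm (u - v) ^+ 2).
Proof.
have -> : u - v = 1 *: u + (-1) *: v by rewrite scale1r scaleN1r.
by rewrite !enorm_combine_sqr; ring.
Qed.

Lemma enorm_segment x y c : 0 <= c <= 1 ->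
  enorm (x - (x + c *: (y - x))) + enorm (x + c *: (y - x) - y) = enorm (x - y).
Proof.
case/andP=> c0 c1.
have -> : x - (x + c *: (y - x)) = c *: (x - y).
  by apply/rowP => i; rewrite !mxE; ring.
have -> : x + c *: (y - x) - y = (1 - c) *: (x - y).
  by apply/rowP => i; rewrite !mxE; ring.
by rewrite !enormZ !ger0_norm ?subr_ge0 // -mulrDl addrC subrK mul1r.
Qed.

Lemma ellipse_point_on_ball_segment {x y z a b} :
  0 <= a -> 0 <= b -> z != x -> z != y ->
  (enorm (x - z) + enorm (z - y)) ^+ 2 < enorm (x - y) ^+ 2 + 4 * a * b ->
  exists p q t, [/\ enorm (p - x) < a, enorm (q - y) < b, 0 <= t <= 1
                  & z = (1 - t) *: p + t *: q].
Proof.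
move=> a0 b0 zx zy; rewrite enorm_distrC.
set u := enorm (z - x); set v := enorm (z - y); set d := enorm (x - y) => ell.
have u0 : 0 < u by rewrite enorm_gt0 // subr_eq0.
have v0 : 0 < v by rewrite enorm_gt0 // subr_eq0.
set W := v *: (z - x) + u *: (z - y).
have W2 : enorm W ^+ 2 = u * v * ((u + v) ^+ 2 - d ^+ 2).
  rewrite enorm_bisector_sqr.
  have -> : z - x - (z - y) = y - x by rewrite opprB addrC addrA subrK.
  by rewrite [enorm (y - x)]enorm_distrC.
have W0 := enorm_ge0 W.
have uv0 : 0 < u * v by exact: mulr_gt0.
have tri : 0 <= (u + v) ^+ 2 - d ^+ 2 by rewrite -(pmulr_rge0 _ uv0) -W2 sqr_ge0.
have ab0 : 0 < a * b by nra.
set L := v * a + u * b.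
have L0 : 0 < L by rewrite /L; nra.
have WL : enorm W < L.
  have amgm : 4 * a * b * (u * v) <= L ^+ 2.
    by rewrite /L; have := sqr_ge0 (v * a - u * b); nra.
  have : enorm W ^+ 2 < 4 * a * b * (u * v) by rewrite W2 mulrC ltr_pM2r //; lra.
  by nra.
have WZ c : 0 <= c -> enorm (c *: W) = c * enorm W by move=> c0; rewrite enormZ ger0_norm.
exists (x + (a / L) *: W), (y + (b / L) *: W), (u / (u + v)); split.
- rewrite addrAC subrr add0r WZ ?divr_ge0 ?(ltW L0) // mulrAC ltr_pdivrMr //; nra.
- rewrite addrAC subrr add0r WZ ?divr_ge0 ?(ltW L0) // mulrAC ltr_pdivrMr //; nra.
- by rewrite divr_ge0 ?ler_pdivrMr /=; lra.
- apply/rowP => i; rewrite /W /L !mxE; field.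
  by rewrite !lt0r_neq0 //; lra.
Qed.

End EuclideanNorm.

Lemma inf_ge0 (R : realType) (S : set R) : (forall y, S y -> 0 <= y) -> 0 <= inf S.
Proof.
have [Sne S_ge0|/nonemptyPn -> _] := pselect (S !=set0); last by rewrite inf0.
exact: lb_le_inf.
Qed.

Section Boundary.
Context {R : realType} {n : nat} {G : set 'rV[R]_n}.
Hypothesis oG : open G.

Lemma bd_notin [z] : bd G z -> ~ G z.
Proof. by move=> [_ nGz] Gz; apply: nGz; move: oG; rewrite interior_id => ->. Qed.

Lemma segment_meets_bd [x q] : G x -> ~ G q ->
  exists2 s : R, 0 <= s <= 1 & bd G (x + s *: (q - x)).
Proof.
move=> Gx Gq; pose f s := x + s *: (q - x).
have cf : continuous f.
  by move=> s; apply: cvgD; [exact: cvg_cst | exact: continuousZr_tmp].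
pose T := [set s | 0 <= s <= 1 /\ G (f s)].
have T0 : T 0 by split; [rewrite lexx ler01 | rewrite /f scale0r addr0].
have hubT : has_ubound T by exists 1 => s [/andP[]].
have ts0 : 0 <= sup T := ub_le_sup hubT T0.
have ts1 : sup T <= 1 by apply: ge_sup; [exists 0 | move=> s [/andP[]]].
exists (sup T); first by rewrite ts0 ts1.
split.
  have clT : closure T (sup T) by apply: closure_sup; first exists 0.
  by move=> B /cf /clT [s [[_ Gfs] Bfs]]; exists (f s).
have intG : G° = G by exact/interior_id.
rewrite intG => Gfts.
have ts_lt1 : sup T < 1.
  rewrite lt_neqAle ts1 andbT; apply: contra_notN Gq => /eqP ts1E.
  by move: Gfts; rewrite /f ts1E scale1r addrC subrK.
(* openness of G lets the segment stay in G a little beyond [sup T] *)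
have : \forall s \near (sup T)^'+, sup T < s /\ s <= 1 /\ G (f s).
  near=> s; split; [near: s; exact: nbhs_right_gt | split].
    by near: s; exact: nbhs_right_ltW.
  by near: s; apply: cvg_within; apply: cf; exact: open_nbhs_nbhs.
move=> /filter_ex[s [tss [s1 Gfs]]].
have Ts : T s by split; [rewrite s1 (ltW (le_lt_trans ts0 tss)) |].
by have := ub_le_sup hubT Ts; rewrite leNgt tss.
Unshelve. all: by end_near.
Qed.

Lemma dG_ge0 x : 0 <= dG G x.
Proof. by apply: inf_ge0 => _ [z _ <-]; exact: enorm_ge0. Qed.

Lemma dG_le_dist x [z] : bd G z -> dG G x <= enorm (x - z).
Proof.
move=> bz; apply: ge_inf; last by exists z.
by exists 0 => _ [w _ <-]; exact: enorm_ge0.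
Qed.

Lemma dG_ball_sub [x p] : G x -> enorm (p - x) < dG G x -> G p.
Proof.
move=> Gx px; apply/not_notP => Gp.
have [s /andP[s0 s1] bz] := segment_meets_bd Gx Gp.
have := dG_le_dist x bz.
have -> : x - (x + s *: (p - x)) = s *: (x - p) by apply/rowP => i; rewrite !mxE; ring.
rewrite enormZ ger0_norm // enorm_distrC.
by have := enorm_ge0 (p - x); nra.
Qed.

Lemma dG_gt0 [x z] : G x -> bd G z -> 0 < dG G x.
Proof.
move=> Gx bz; have : nbhs x G by exact: open_nbhs_nbhs.
rewrite -filter_from_norm_nbhs => -[e /= e0 xeG].
apply: lt_le_trans e0 _; apply: lb_le_inf => [|_ [w bw <-]].
  by exists (enorm (x - z)); exists z.
apply: le_trans (mx_norm_le_enorm _); rewrite leNgt; apply/negP.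
by move=> /xeG; exact: bd_notin bw.
Qed.

End Boundary.

Section TriangularRatio.
Context {R : realType} {n : nat} {G : set 'rV[R]_n}.
Hypothesis oG : open G.

Lemma convex_dG_ellipse x y z : convex_dom G -> G x -> G y -> bd G z ->
  enorm (x - y) ^+ 2 + 4 * dG G x * dG G y <= (enorm (x - z) + enorm (z - y)) ^+ 2.
Proof.
move=> cG Gx Gy bz; rewrite leNgt; apply/negP => ell.
have nGz := bd_notin oG bz.
have [zx zy] : z != x /\ z != y by split; apply: contra_notN nGz => /eqP ->.
have [p [q [t [px qy /andP[t0 t1] zE]]]] :=
  ellipse_point_on_ball_segment (dG_ge0 x) (dG_ge0 y) zx zy ell.
apply: nGz; rewrite zE; apply: cG => //.
  exact: (dG_ball_sub oG Gx px).
exact: (dG_ball_sub oG Gy qy).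
Qed.

Lemma convex_sG_le_pG x y : convex_dom G -> G x -> G y -> sG G x y <= pG G x y.
Proof.
move=> cG Gx Gy; rewrite /sG /pG.
set d := enorm (x - y); set S := [set _ | _ in bd G].
have [d0|d_neq0] := eqVneq d 0; first by rewrite d0 !mul0r.
have d_gt0 : 0 < d by rewrite lt_neqAle eq_sym d_neq0 enorm_ge0.
have [Sne|/nonemptyPn S0] := pselect (S !=set0); last first.
  by rewrite S0 inf0 invr0 mulr0 divr_ge0 ?enorm_ge0 ?sqrtr_ge0.
set X := d ^+ 2 + 4 * dG G x * dG G y.
have X_gt0 : 0 < X.
  have : 0 <= dG G x * dG G y by rewrite mulr_ge0 ?dG_ge0.
  by rewrite /X; nra.
have XS : Num.sqrt X <= inf S.
  apply: lb_le_inf => // _ [z bz <-].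
  have S_ge0 : 0 <= enorm (x - z) + enorm (z - y) by rewrite addr_ge0 ?enorm_ge0.
  rewrite -(ger0_norm S_ge0) -sqrtr_sqr ler_sqrt ?sqr_ge0 //.
  exact: convex_dG_ellipse.
have sqrtX_gt0 : 0 < Num.sqrt X by rewrite sqrtr_gt0.
have S_gt0 : 0 < inf S := lt_le_trans sqrtX_gt0 XS.
by rewrite ler_pM2l // lef_pV2 ?posrE.
Qed.

Lemma pG_lt_sG_bd_between [x y z] : G x -> G y -> bd G z ->
  enorm (x - z) + enorm (z - y) = enorm (x - y) -> pG G x y < sG G x y.
Proof.
move=> Gx Gy bz between; rewrite /sG /pG.
set d := enorm (x - y); set S := [set _ | _ in bd G].
have nGz := bd_notin oG bz.
have dGx_gt0 := dG_gt0 oG Gx bz; have dGy_gt0 := dG_gt0 oG Gy bz.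
have d_gt0 : 0 < d.
  have : 0 < enorm (x - z).
    by rewrite enorm_gt0 // subr_eq0; apply: contra_notN nGz => /eqP <-.
  by rewrite /d -between; have := enorm_ge0 (z - y); lra.
have S_le_d : inf S <= d.
  by apply: ge_inf; [exists 0 => _ [w _ <-]; rewrite addr_ge0 ?enorm_ge0 | exists z].
have S_gt0 : 0 < inf S.
  apply: lt_le_trans dGx_gt0 _; apply: lb_le_inf => [|_ [w bw <-]]; first by exists d, z.
  by have := dG_le_dist x bw; have := enorm_ge0 (w - y); lra.
have d_lt : d < Num.sqrt (d ^+ 2 + 4 * dG G x * dG G y).
  have sqrt_d2 : Num.sqrt (d ^+ 2) = d by rewrite sqrtr_sqr gtr0_norm.
  have : 0 < dG G x * dG G y by exact: mulr_gt0.
  by rewrite -{1}sqrt_d2 ltr_sqrt; nra.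
have sqrtX_gt0 := lt_trans d_gt0 d_lt.
by rewrite ltr_pM2l // ltf_pV2 ?posrE // (le_lt_trans S_le_d).
Qed.

End TriangularRatio.

Theorem theorem3p7 (R : realType) (n : nat) (G : set 'rV[R]_n) :
  (2 <= n)%N -> domain G -> G <> setT ->
  (convex_dom G <-> forall x y, G x -> G y -> sG G x y <= pG G x y).
Proof.
move=> _ [_ [oG _]] _; split=> [cG x y|sG_le_pG x y Gx Gy t t0 t1].
  exact: convex_sG_le_pG.
apply/not_notP => nGw.
have [s /andP[s0 s1] bz] := segment_meets_bd oG Gx nGw.
have wx : (1 - t) *: x + t *: y - x = t *: (y - x).
  by apply/rowP => i; rewrite !mxE; ring.
rewrite wx scalerA in bz.
have := sG_le_pG x y Gx Gy; apply/negP; rewrite -ltNge.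
apply: (pG_lt_sG_bd_between oG Gx Gy bz); apply: enorm_segment.
by rewrite mulr_ge0 // mulr_ile1.
Qed.
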